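(* Let $\ell=\ell(n)$ be positive integers with $\ell\mid n$ and $\ell=o(n)$. Let $T^*$ be the minimum, over all fitness-dependent mutation rate sequences $(p_0,\dots,p_{n/\ell-1})\in(0,1)^{n/\ell}$, of the expected runtime of the (1+1) EA on $\mathrm{BLO}_\ell$. Then, as $n\to\infty$, \[ T^*=(1+o(1))\,\frac{e}{2}\cdot\frac{b2^\ell}{\ell}\,n^2. \]
   Context: For $\ell\ge1$ let $s(\ell)=\sum_{j=1}^\ell\binom{\ell}{j}\frac1j$ and $b=s(\ell)/2^{\ell+1}$. For $x\in\{0,1\}^n$ with $\ell\mid n$, $\mathrm{BLO}_\ell(x)=\sum_{m=1}^{n/\ell}\prod_{i=1}^{m\ell}x_i$. The (1+1) EA with fitness-dependent rates $(p_m)$: $x_0$ uniform on $\{0,1\}^n$; in each iteration an offspring $y$ is created from the current $x$ by flipping each bit independently with probability $p_{\mathrm{BLO}_\ell(x)}$, and $y$ replaces $x$ iff $\mathrm{BLO}_\ell(y)\ge\mathrm{BLO}_\ell(x)$. The runtime is the number of iterations until the current individual first has fitness $n/\ell$ (zero if $x_0$ already does); its expectation is $\sum_{m=0}^{n/\ell-1}(1-p_m)^{-m\ell}\sum_{j=1}^{\ell}\binom{\ell}{j}\frac{1}{1-(1-2p_m)^j}$. *)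

From HB Require Import structures.
From mathcomp Require Import all_boot all_order all_algebra.
From mathcomp Require Import all_classical all_reals all_analysis.
Set Implicit Arguments. Unset Strict Implicit. Unset Printing Implicit Defensive.
Import Order.TTheory GRing.Theory Num.Theory.
Local Open Scope ring_scope.
Local Open Scope classical_set_scope.

Section BLO.
Variable R : realType.

Definition s_coef (l : nat) : R := \sum_(1 <= j < l.+1) 'C(l, j)%:R / j%:R.

Definition b_coef (l : nat) : R := s_coef l / 2 ^+ l.+1.

(* Expected runtime of the (1+1) EA with fitness-dependent rates p_0..p_{n/l-1}
   on BLO_l (closed formula given in the paper's context):
   sum_{m=0}^{n/l-1} (1-p_m)^{-m l} sum_{j=1}^l C(l,j) / (1-(1-2p_m)^j). *)
Definition expected_runtime (n l : nat) (p : 'I_(n %/ l) -> R) : R :=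
  \sum_(m < n %/ l)
     ((1 - p m) ^+ (m * l))^-1 *
     \sum_(1 <= j < l.+1) 'C(l, j)%:R / (1 - (1 - 2 * p m) ^+ j).

Definition opt_runtime (n l : nat) : R :=
  inf [set t | exists p : 'I_(n %/ l) -> R,
                 (forall m, 0 < p m < 1) /\ t = expected_runtime p].

End BLO.

From HB Require Import structures.
From mathcomp Require Import all_boot all_order all_algebra.
From mathcomp Require Import all_classical all_reals all_analysis.
From mathcomp.algebra_tactics Require Import ring lra.
Set Implicit Arguments. Unset Strict Implicit. Unset Printing Implicit Defensive.
Import Order.TTheory GRing.Theory Num.Theory.
Import numFieldNormedType.Exports.
Local Open Scope classical_set_scope.
Local Open Scope ring_scope.

(* Write N = n/l.  The expected runtime is a sum over the levels m < N of the
   level costs  C(k, p) = (1-p)^(-k) * sum_{j=1}^l binom(l,j) / (1-(1-2p)^j)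
   with k = m*l, each depending only on its own rate p = p_m.  We bound every
   level cost on both sides by elementary inequalities:
   - lower bound, for every rate:  1-(1-2p)^j <= 2pj  (Bernoulli) and
     (1-p)^(-k) >= exp(pk) >= e*pk give  C(k, p) >= e*k*s(l)/2;
   - upper bound, for the rate p = 1/(k+2):  (1-p)^(-k) <= e and
     1/(1-(1-2p)^j) <= 1/(2pj) + 1 give  C(k, p) <= e*s(l)*((k+2)/2 + l).
   Summing over m (with sum_{m<N} m = N(N-1)/2) squeezes the optimum T* between
   e*s*l*N(N-1)/4 and the same quantity plus e*s*N*(1+l).  Since the
   normalizer (e/2)(b 2^l / l) n^2 equals e*s*l*N^2/4, the normalized optimum
   lies in [1 - l/n, 1 + 8 l/n], and l/n -> 0 concludes by squeezing. *)

Section FieldFacts.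
Variable R : realFieldType.

Lemma one_sub_expr_bounds (q : R) (j : nat) : -1 < q < 1 -> (0 < j)%N ->
  0 < 1 - q ^+ j <= (1 - q) * j%:R.
Proof.
move=> /andP[qm1 q1] j_gt0.
have q_lt1 : `|q| < 1 by rewrite ltr_norml qm1.
have qj_lt1 : q ^+ j < 1.
  by apply: le_lt_trans (ler_norm _) _; rewrite normrX expr_lt1.
rewrite subr_gt0 qj_lt1 /=.
have -> : 1 - q ^+ j = (1 - q) * \sum_(i < j) q ^+ i.
  by rewrite -[1 - _]opprB subrX1; ring.
rewrite ler_pM2l ?subr_gt0 //.
have -> : (j%:R : R) = \sum_(i < j) 1 by rewrite sumr_const card_ord.
apply: ler_sum => i _; apply: le_trans (ler_norm _) _.
by rewrite normrX; exact: exprn_ile1 (normr_ge0 _) (ltW q_lt1).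
Qed.

Lemma sum_ord_natr (N : nat) : (\sum_(m < N) (m%:R : R)) * 2 = N%:R * (N%:R - 1).
Proof.
elim: N => [|N IH]; first by rewrite big_ord0; ring.
by rewrite big_ord_recr /= mulrDl IH -natr1; ring.
Qed.

End FieldFacts.

Section ExpBounds.
Variable R : realType.

Lemma expR1_mul_le (x : R) : expR 1 * x <= expR x.
Proof.
have -> : expR x = expR 1 * expR (x - 1) by rewrite -expRD; congr expR; ring.
by rewrite ler_wpM2l ?expR_ge0 //; have := expR_ge1Dx (x - 1); lra.
Qed.

Lemma expR_le_inv_expr (p : R) (k : nat) : 0 <= p < 1 ->
  expR (p * k%:R) <= ((1 - p) ^+ k)^-1.
Proof.
move=> /andP[p_ge0 p_lt1].
have qk_le : (1 - p) ^+ k <= expR (- p) ^+ k.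
  by rewrite lerXn2r ?nnegrE ?expR_ge0 //; [lra | have := expR_ge1Dx (- p); lra].
have -> : expR (p * k%:R) = (expR (- p) ^+ k)^-1.
  by rewrite -expRM_natr mulNr expRN invrK.
have q_gt0 : 0 < 1 - p by lra.
by rewrite lef_pV2 ?posrE ?exprn_gt0 ?expR_gt0.
Qed.

Lemma inv_expr_rate_le_e (k : nat) :
  ((1 - (k%:R + 2)^-1) ^+ k)^-1 <= expR 1 :> R.
Proof.
have k_ge0 : (0 : R) <= k%:R := ler0n _ k.
have inv_step : (1 - (k%:R + 2)^-1)^-1 = 1 + (k%:R + 1)^-1 :> R.
  by field; rewrite ?andbT; apply/andP; split; apply/eqP; lra.
rewrite -exprVn inv_step.
apply: (@le_trans _ _ (expR ((k%:R + 1)^-1) ^+ k)).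
  by rewrite lerXn2r ?nnegrE ?expR_ge0 ?expR_ge1Dx // addr_ge0 ?invr_ge0 //; lra.
rewrite -expRM_natr ler_expR mulrC ler_pdivrMr; lra.
Qed.

Lemma inv_one_sub_expr_le (x : R) (j : nat) : 0 < x <= 1 -> (0 < j)%N ->
  (1 - (1 - x) ^+ j)^-1 <= (x * j%:R)^-1 + 1.
Proof.
move=> /andP[x_gt0 x_le1] j_gt0.
set y := x * j%:R.
have y_gt0 : 0 < y by rewrite /y mulr_gt0 ?ltr0n.
have qj_le : (1 - x) ^+ j <= (1 + y)^-1.
  apply: (@le_trans _ _ (expR (- x) ^+ j)).
    by rewrite lerXn2r ?nnegrE ?expR_ge0 //; [lra | have := expR_ge1Dx (- x); lra].
  rewrite -expRM_natr mulNr expRN lef_pV2 ?posrE ?expR_gt0 //; last lra.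
  exact: expR_ge1Dx.
have y_frac : y / (1 + y) = 1 - (1 + y)^-1 by field; lra.
have y_frac_gt0 : 0 < y / (1 + y) by rewrite divr_gt0 //; lra.
apply: (@le_trans _ _ (y / (1 + y))^-1).
  by rewrite lef_pV2 ?posrE //; [lra | apply: lt_le_trans y_frac_gt0 _; lra].
by rewrite invf_div mulrDl mul1r divff ?gt_eqF.
Qed.

End ExpBounds.

Section LevelCost.
Variable R : realType.

(* Expected number of iterations spent at fitness level m, where the k = m*l
   leading bits are fixed and the next l-bit block is uniformly random. *)
Definition level_cost (L k : nat) (p : R) : R :=
  ((1 - p) ^+ k)^-1 * \sum_(1 <= j < L.+1) 'C(L, j)%:R / (1 - (1 - 2 * p) ^+ j).

Lemma expected_runtimeE (n L : nat) (p : 'I_(n %/ L) -> R) :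
  expected_runtime p = \sum_(m < n %/ L) level_cost L (m * L) (p m).
Proof. by []. Qed.

Lemma s_coef_ge0 (L : nat) : 0 <= s_coef R L.
Proof. by apply: sumr_ge0 => j _; exact: divr_ge0. Qed.

(* The j = 1 term of s(l) alone already gives s(l) >= l. *)
Lemma s_coef_ge (L : nat) : (0 < L)%N -> (L%:R : R) <= s_coef R L.
Proof.
move=> L_gt0; rewrite /s_coef big_ltn // bin1 divr1 lerDl big_nat.
by apply: sumr_ge0 => j _; exact: divr_ge0.
Qed.

Lemma block_sum_ge (L : nat) (p : R) : 0 < p < 1 ->
  s_coef R L / (2 * p) <=
  \sum_(1 <= j < L.+1) 'C(L, j)%:R / (1 - (1 - 2 * p) ^+ j).
Proof.
move=> /andP[p_gt0 p_lt1].
rewrite /s_coef mulr_suml; apply: ler_sum_nat => j /andP[j_gt0 _].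
have q_range : -1 < 1 - 2 * p < 1 by apply/andP; split; lra.
have /andP[den_gt0 den_le] := one_sub_expr_bounds q_range j_gt0.
have one_sub_q : 1 - (1 - 2 * p) = 2 * p by ring.
rewrite one_sub_q in den_le; rewrite -mulrA -invfM [j%:R * _]mulrC ler_wpM2l // lef_pV2 ?posrE //.
by rewrite mulr_gt0 ?ltr0n //; lra.
Qed.

Lemma block_sum_le (L : nat) (p : R) : 0 < p <= 1 / 2 ->
  \sum_(1 <= j < L.+1) 'C(L, j)%:R / (1 - (1 - 2 * p) ^+ j) <=
  s_coef R L * ((2 * p)^-1 + L%:R).
Proof.
move=> /andP[p_gt0 p_le].
rewrite /s_coef mulr_suml; apply: ler_sum_nat => j /andP[j_gt0 j_le].
have jL : (j%:R : R) <= L%:R by rewrite ler_nat -ltnS.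
have j_gt0R : (0 : R) < j%:R by rewrite ltr0n.
apply: (@le_trans _ _ ('C(L, j)%:R * ((2 * p * j%:R)^-1 + 1))).
  by rewrite ler_wpM2l // inv_one_sub_expr_le //; apply/andP; split; lra.
have -> : 'C(L, j)%:R * ((2 * p * j%:R)^-1 + 1) =
    'C(L, j)%:R / j%:R * ((2 * p)^-1 + j%:R) :> R.
  by field; apply/andP; split; apply/eqP; lra.
by rewrite ler_wpM2l ?divr_ge0 // lerD2l.
Qed.

Lemma level_cost_ge (L k : nat) (p : R) : 0 < p < 1 ->
  expR 1 * k%:R * s_coef R L / 2 <= level_cost L k p.
Proof.
move=> p_range; have /andP[p_gt0 p_lt1] := p_range.
have s_frac_ge0 : 0 <= s_coef R L / (2 * p) by rewrite divr_ge0 ?s_coef_ge0 //; lra.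
have -> : expR 1 * k%:R * s_coef R L / 2 =
          expR 1 * (p * k%:R) * (s_coef R L / (2 * p)) by field; lra.
have epk_ge0 : 0 <= expR 1 * (p * k%:R).
  by rewrite mulr_ge0 ?expR_ge0 // mulr_ge0 ?ler0n //; lra.
apply: ler_pM => //; last exact: block_sum_ge.
by apply: le_trans (expR1_mul_le _) _; apply: expR_le_inv_expr; lra.
Qed.

Lemma level_cost_rate_le (L k : nat) :
  level_cost L k (k%:R + 2)^-1 <= expR 1 * (s_coef R L * ((k%:R + 2) / 2 + L%:R)).
Proof.
have k_ge0 : (0 : R) <= k%:R := ler0n _ k.
set p : R := (k%:R + 2)^-1.
have p_gt0 : 0 < p by rewrite invr_gt0; lra.
have p_le : p <= 1 / 2 by rewrite -[X in _ <= X]invf_div divr1 lef_pV2 ?posrE //; lra.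
have inv2p : (2 * p)^-1 = (k%:R + 2) / 2 by rewrite /p; field; lra.
apply: ler_pM; rewrite ?inv_expr_rate_le_e -?inv2p ?block_sum_le ?p_gt0 //.
  by rewrite invr_ge0 exprn_ge0 // subr_ge0; lra.
rewrite big_nat; apply: sumr_ge0 => j /andP[j_gt0 _].
have q_range : -1 < 1 - 2 * p < 1 by apply/andP; split; lra.
have /andP[den_gt0 _] := one_sub_expr_bounds q_range j_gt0.
by rewrite divr_ge0 // ltW.
Qed.

End LevelCost.

Section Runtime.
Variable R : realType.

Lemma expected_runtime_ge (n L : nat) (p : 'I_(n %/ L) -> R) :
  (forall m, 0 < p m < 1) ->
  expR 1 * s_coef R L * L%:R / 4 * ((n %/ L)%:R * ((n %/ L)%:R - 1))
  <= expected_runtime p.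
Proof.
move=> p_range; rewrite expected_runtimeE -sum_ord_natr.
have -> : expR 1 * s_coef R L * L%:R / 4 * ((\sum_(m < n %/ L) (m%:R : R)) * 2) =
    \sum_(m < n %/ L) expR 1 * (m * L)%:R * s_coef R L / 2.
  rewrite [_ * 2]mulrC mulrA mulr_sumr; apply: eq_bigr => m _.
  by rewrite natrM; field.
by apply: ler_sum => m _; exact: level_cost_ge.
Qed.

Definition level_rate (L m : nat) : R := ((m * L)%:R + 2)^-1.

Lemma level_rate_range (L m : nat) : 0 < level_rate L m < 1.
Proof.
have mL_ge0 : (0 : R) <= (m * L)%:R := ler0n _ _.
by rewrite invr_gt0 invf_lt1; lra.
Qed.

Lemma expected_runtime_rate_le (n L : nat) :
  expected_runtime (fun m : 'I_(n %/ L) => level_rate L m) <=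
  expR 1 * s_coef R L *
    (L%:R / 4 * ((n %/ L)%:R * ((n %/ L)%:R - 1)) + (n %/ L)%:R * (1 + L%:R)).
Proof.
have summed_bound : \sum_(m < n %/ L)
    expR 1 * (s_coef R L * (((m * L)%:R + 2) / 2 + L%:R)) =
    expR 1 * s_coef R L *
      (L%:R / 4 * ((n %/ L)%:R * ((n %/ L)%:R - 1)) + (n %/ L)%:R * (1 + L%:R)).
  have NE : ((n %/ L)%:R : R) = \sum_(m < n %/ L) 1 by rewrite sumr_const card_ord.
  rewrite -sum_ord_natr NE (eq_bigr (fun m : 'I_(n %/ L) =>
    expR 1 * s_coef R L * (L%:R / 2) * m%:R + expR 1 * s_coef R L * (1 + L%:R) * 1)).
    by rewrite big_split /= -!mulr_sumr; field.
  by move=> m _; rewrite natrM; field.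
rewrite expected_runtimeE -summed_bound.
by apply: ler_sum => m _; exact: level_cost_rate_le.
Qed.

Lemma opt_runtime_bounds (n L : nat) :
  expR 1 * s_coef R L * L%:R / 4 * ((n %/ L)%:R * ((n %/ L)%:R - 1))
  <= opt_runtime R n L <=
  expR 1 * s_coef R L *
    (L%:R / 4 * ((n %/ L)%:R * ((n %/ L)%:R - 1)) + (n %/ L)%:R * (1 + L%:R)).
Proof.
set lb := expR 1 * s_coef R L * L%:R / 4 * _.
set E := [set t | exists p : 'I_(n %/ L) -> R,
            (forall m, 0 < p m < 1) /\ t = expected_runtime p].
have E_lb : lbound E lb by move=> t [p [p_range ->]]; exact: expected_runtime_ge.
have rate_in_E : E (expected_runtime (fun m : 'I_(n %/ L) => level_rate L m)).
  by exists (fun m => level_rate L m); split => // m; exact: level_rate_range.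
apply/andP; split; first exact: lb_le_inf (ex_intro _ _ rate_in_E) E_lb.
apply: le_trans (expected_runtime_rate_le n L).
by apply: ge_inf rate_in_E; exists lb.
Qed.

Lemma normalizerE (N L : nat) : (0 < L)%N ->
  expR 1 / 2 * (b_coef R L * 2 ^+ L / L%:R) * (N * L)%:R ^+ 2 =
  expR 1 * s_coef R L * L%:R / 4 * (N%:R * N%:R).
Proof.
move=> L_gt0; rewrite /b_coef exprS natrM; field.
by rewrite pnatr_eq0 -lt0n L_gt0 expf_neq0.
Qed.

Lemma opt_runtime_ratio_bounds (n L : nat) : (0 < n)%N -> (0 < L)%N -> (L %| n)%N ->
  1 - L%:R / n%:R <= opt_runtime R n L /
     (expR 1 / 2 * (b_coef R L * 2 ^+ L / L%:R) * n%:R ^+ 2)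
  <= 1 + 8 * (L%:R / n%:R).
Proof.
move=> n_gt0 L_gt0 /dvdnP[N n_eq]; rewrite n_eq normalizerE //.
have N_gt0 : (0 < N)%N by move: n_gt0; rewrite n_eq muln_gt0 => /andP[].
have NR : (1 : R) <= N%:R by rewrite ler1n.
have LR : (1 : R) <= L%:R by rewrite ler1n.
have sL := s_coef_ge R L_gt0.
have e_ge1 : 1 <= expR 1 :> R by rewrite -expR0 ler_expR.
have norm_gt0 : 0 < expR 1 * s_coef R L * L%:R / 4 * (N%:R * N%:R).
  by rewrite !mulr_gt0 //; lra.
have LnE : (L%:R / (N * L)%:R : R) = N%:R^-1.
  by rewrite natrM; field; apply/andP; split; apply/eqP; lra.
have := opt_runtime_bounds n L; rewrite n_eq mulnK // LnE.
move=> /andP[T_ge T_le]; apply/andP; split.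
  rewrite ler_pdivlMr //; apply: le_trans T_ge.
  have -> : (1 - N%:R^-1) * (expR 1 * s_coef R L * L%:R / 4 * (N%:R * N%:R)) =
      expR 1 * s_coef R L * L%:R / 4 * (N%:R * (N%:R - 1)).
    by field; rewrite pnatr_eq0 -lt0n.
  exact: lexx.
rewrite ler_pdivrMr //; apply: le_trans T_le _; rewrite -subr_ge0.
have -> : (1 + 8 * N%:R^-1) * (expR 1 * s_coef R L * L%:R / 4 * (N%:R * N%:R)) -
    expR 1 * s_coef R L * (L%:R / 4 * (N%:R * (N%:R - 1)) + N%:R * (1 + L%:R)) =
    expR 1 * s_coef R L * N%:R * (5 / 4 * L%:R - 1).
  by field; rewrite pnatr_eq0 -lt0n.
by rewrite mulr_ge0 //; [rewrite !mulr_ge0 //; lra | lra].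
Qed.

End Runtime.

Theorem mainTheorem10 (R : realType) (l : nat -> nat) :
  (forall n : nat, (0 < l n)%N) ->
  (forall n : nat, (l n %| n)%N) ->
  ((fun n : nat => ((l n)%:R / n%:R : R)) @ \oo --> (0 : R)) ->
  ((fun n : nat => (opt_runtime R n (l n) /
     (expR 1 / 2 * (b_coef R (l n) * 2 ^+ l n / (l n)%:R) * n%:R ^+ 2) : R))
    @ \oo --> (1 : R)).
Proof.
move=> l_gt0 l_dvd ratio_to0.
apply: (@squeeze_cvgr _ _ _ _ (fun n => 1 - (l n)%:R / n%:R)
          (fun n => 1 + 8 * ((l n)%:R / n%:R))).
- by exists 1%N => // n /= n_ge1; exact: opt_runtime_ratio_bounds.
- by rewrite -[X in _ --> X](subr0 (1 : R)); apply: cvgB => //; exact: cvg_cst.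
- rewrite -[X in _ --> X](addr0 (1 : R)); apply: cvgD; first exact: cvg_cst.
  by rewrite -(mulr0 (8 : R)); apply: cvgM => //; exact: cvg_cst.
Qed.
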